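(* Let $K$ be a field, $I\subset R=K[x_1,\ldots,x_n]$ a monomial ideal, and $h$ a monomial in $R$ such that $\gcd(h,u)=1$ for every minimal monomial generator $u$ of $I$. Then $I$ has the nearly copersistence property if and only if $hI$ has the nearly copersistence property.
   Context: A monomial ideal $I\subset R$ has the nearly copersistence property if there exist a positive integer $s$ and a monomial prime ideal $\mathfrak{p}$ such that $\mathrm{Ass}_R(R/I^m)\cup\{\mathfrak{p}\}\supseteq\mathrm{Ass}_R(R/I^{m+1})$ for all $1\le m\le s$, and $\mathrm{Ass}_R(R/I^m)\supseteq\mathrm{Ass}_R(R/I^{m+1})$ for all $m\ge s+1$. *)

From HB Require Import structures.
From mathcomp Require Import all_boot all_order all_algebra.
From mathcomp Require Import mpoly.
Set Implicit Arguments. Unset Strict Implicit. Unset Printing Implicit Defensive.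
Import GRing.Theory.
Local Open Scope ring_scope.

Section Defs.
Variables (K : fieldType) (n : nat).
Local Notation R := {mpoly K[n]}.

Definition ideal_gen (S : R -> Prop) : R -> Prop :=
  fun f => exists r : seq (R * R),
    (forall x, x \in r -> S x.1) /\ f = \sum_(x <- r) x.2 * x.1.

Definition is_ideal (J : R -> Prop) : Prop :=
  J 0 /\ (forall f g, J f -> J g -> J (f + g)) /\ (forall a f, J f -> J (a * f)).

Definition is_prime_ideal (P : R -> Prop) : Prop :=
  is_ideal P /\ ~ P 1 /\ (forall f g, P (f * g) -> P f \/ P g).

Definition is_monomial (f : R) : Prop := exists m : 'X_{1..n}, f = 'X_[m].

Definition is_monomial_ideal (J : R -> Prop) : Prop :=
  exists S : R -> Prop, (forall f, S f -> is_monomial f) /\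
    (forall f, J f <-> ideal_gen S f).

Definition is_monomial_prime (P : R -> Prop) : Prop :=
  exists A : {set 'I_n},
    forall f, P f <-> ideal_gen (fun g => exists2 i, i \in A & g = 'X_i) f.

Definition ideal_mul (J1 J2 : R -> Prop) : R -> Prop :=
  ideal_gen (fun f => exists g h, J1 g /\ J2 h /\ f = g * h).

Fixpoint ideal_pow (J : R -> Prop) (m : nat) : R -> Prop :=
  match m with
  | 0 => fun _ => True
  | m'.+1 => ideal_mul (ideal_pow J m') J
  end.

Definition ideal_scale (h : R) (J : R -> Prop) : R -> Prop :=
  ideal_gen (fun f => exists2 g, J g & f = h * g).

(* P \in Ass_R(R/J): P is a prime ideal with P = (J : f) for some f in R *)
Definition Ass (J : R -> Prop) (P : R -> Prop) : Prop :=
  is_prime_ideal P /\ exists f : R, forall g, P g <-> J (g * f).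

Definition same_ideal (P Q : R -> Prop) : Prop := forall f, P f <-> Q f.

Definition nearly_copersistent (I : R -> Prop) : Prop :=
  exists (s : nat) (p : R -> Prop), (0 < s)%N /\ is_monomial_prime p /\
    (forall m, (1 <= m <= s)%N -> forall P,
        Ass (ideal_pow I m.+1) P -> Ass (ideal_pow I m) P \/ same_ideal P p) /\
    (forall m, (s.+1 <= m)%N -> forall P,
        Ass (ideal_pow I m.+1) P -> Ass (ideal_pow I m) P).

Definition mgcd (a b : 'X_{1..n}) : 'X_{1..n} :=
  [multinom minn (a i) (b i) | i < n].

Definition min_mon_gen (J : R -> Prop) (m : 'X_{1..n}) : Prop :=
  J 'X_[m] /\ (forall m' : 'X_{1..n}, J 'X_[m'] -> (m' <= m)%MM -> m' = m).

End Defs.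

From Stdlib Require Import Classical FunctionalExtensionality PropExtensionality.
From HB Require Import structures.
From mathcomp Require Import all_boot all_order all_algebra.
From mathcomp Require Import mpoly ring zify.
Import GRing.Theory.
Local Open Scope ring_scope.
Set Implicit Arguments. Unset Strict Implicit.

(* Write h = x^a.  Since no minimal generator of I involves a variable x_j
   dividing h, every power I^k is stable under deleting those variables from
   its monomials, so each such x_j is a nonzerodivisor modulo I^k.  An
   associated prime of (hI)^k = h^k I^k is then either associated to I^k or of
   the form (x^(ka) : f), and the primes of the second kind are exactly the
   (x_j) with x_j | h (none if I = 0).  Hence for k >= 1,
   Ass((hI)^k) = Ass(I^k) + {(x_j) : x_j | h}, a disjoint union whose second
   part does not depend on k, and the containments defining nearly
   copersistence hold for I exactly when they hold for hI. *)

Section NearlyCopersistentFamily.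
Variables (T : Type) (admissible : T -> Prop) (same : T -> T -> Prop).

Definition nearly_copersistent_family (A : nat -> T -> Prop) : Prop :=
  exists (s : nat) (p : T), (0 < s)%N /\ admissible p /\
    (forall m, (1 <= m <= s)%N -> forall P, A m.+1 P -> A m P \/ same P p) /\
    (forall m, (s.+1 <= m)%N -> forall P, A m.+1 P -> A m P).

Lemma nearly_copersistent_family_disjoint_union (A B : nat -> T -> Prop)
    (E : T -> Prop) :
  (forall m P, (0 < m)%N -> B m P <-> A m P \/ E P) ->
  (forall m P, A m P -> ~ E P) ->
  nearly_copersistent_family A <-> nearly_copersistent_family B.
Proof.
move=> AB AE.
have BA m P : (0 < m)%N -> A m P -> B m P by move=> m_gt0 AP; apply/AB; [|left].
have BE m P : (0 < m)%N -> E P -> B m P by move=> m_gt0 EP; apply/AB; [|right].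
split=> [] [s [p [s_gt0 [adm_p [early late]]]]]; exists s, p; do 3 split => //.
- move=> m le_1ms P; have /andP[m_gt0 _] := le_1ms.
  case/AB=> // [AP|EP]; last by left; apply: BE.
  by have [Am|] := early m le_1ms P AP; [left; apply: BA | right].
- move=> m le_sm P; have m_gt0 : (0 < m)%N := leq_ltn_trans (leq0n s) le_sm.
  by case/AB=> // [AP|EP]; [apply: BA (late m le_sm P AP) | apply: BE].
- move=> m le_1ms P AP; have /andP[m_gt0 _] := le_1ms.
  have [/AB[//|Am|/(AE _ _ AP)//]|] := early m le_1ms P (BA m.+1 P isT AP); by [left|right].
- move=> m le_sm P AP; have m_gt0 : (0 < m)%N := leq_ltn_trans (leq0n s) le_sm.
  by have /AB[//|//|/(AE _ _ AP)] := late m le_sm P (BA m.+1 P isT AP).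
Qed.

End NearlyCopersistentFamily.

Section Ideals.
Variables (K : fieldType) (n : nat).
Local Notation R := {mpoly K[n]}.
Implicit Types (J S P : R -> Prop) (f g F : R) (b d e m : 'X_{1..n}).

Lemma pred_ext J1 J2 : (forall f, J1 f <-> J2 f) -> J1 = J2.
Proof.
move=> eqJ; apply: functional_extensionality => f.
exact: propositional_extensionality.
Qed.

Lemma ideal0 J : is_ideal J -> J 0.
Proof. by case. Qed.

Lemma idealD J f g : is_ideal J -> J f -> J g -> J (f + g).
Proof. by case=> _ [addJ _]; apply: addJ. Qed.

Lemma idealMl J c f : is_ideal J -> J f -> J (c * f).
Proof. by case=> _ [_ mulJ]; apply: mulJ. Qed.

Lemma idealMr J c f : is_ideal J -> J f -> J (f * c).
Proof. by rewrite mulrC; apply: idealMl. Qed.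

Lemma idealZ J c f : is_ideal J -> J f -> J (c *: f).
Proof. by rewrite -mul_mpolyC; apply: idealMl. Qed.

Lemma ideal_sum (I : eqType) J (r : seq I) (F : I -> R) :
  is_ideal J -> (forall i, i \in r -> J (F i)) -> J (\sum_(i <- r) F i).
Proof.
move=> idJ; elim: r => [|i r IHr] Jr; first by rewrite big_nil; exact: ideal0.
rewrite big_cons; apply: idealD => //; first by apply: Jr; rewrite mem_head.
by apply: IHr => k rk; apply: Jr; rewrite inE rk orbT.
Qed.

Lemma ideal_gen_ideal S : is_ideal (ideal_gen S).
Proof.
split; first by exists [::]; rewrite big_nil.
split.
  move=> _ _ [r1 [S1 ->]] [r2 [S2 ->]]; exists (r1 ++ r2); rewrite big_cat.
  by split=> // x; rewrite mem_cat => /orP[]; [apply: S1|apply: S2].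
move=> c _ [r [Sr ->]]; exists [seq (x.1, c * x.2) : R * R | x <- r]; split.
  by move=> y /mapP[x rx ->] /=; exact: Sr.
by rewrite big_map mulr_sumr; apply: eq_bigr => x _; rewrite mulrA.
Qed.

Lemma ideal_gen_mem S f : S f -> ideal_gen S f.
Proof.
by move=> Sf; exists [:: (f, 1)]; rewrite big_seq1 mul1r; split=> // x /[!inE] /eqP->.
Qed.

Lemma ideal_gen_min S J : is_ideal J -> (forall f, S f -> J f) ->
  forall f, ideal_gen S f -> J f.
Proof.
move=> idJ SJ _ [r [Sr ->]]; apply: ideal_sum => // x rx.
by apply: idealMl => //; apply/SJ/Sr.
Qed.

Lemma ideal_pow_ideal J k : is_ideal J -> is_ideal (ideal_pow J k).
Proof. by case: k => [|k] _ /=; [do 2 split | exact: ideal_gen_ideal]. Qed.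

Lemma ideal_pow_sub J k f : is_ideal J -> (0 < k)%N -> ideal_pow J k f -> J f.
Proof.
case: k => // k idJ _ /=.
by apply: ideal_gen_min => // _ [g [h [_ [Jh ->]]]]; apply: idealMl.
Qed.

Lemma ideal_pow_exp J f k : J f -> ideal_pow J k (f ^+ k).
Proof.
move=> Jf; elim: k => [|k IHk] //=.
by apply: ideal_gen_mem; exists (f ^+ k), f; rewrite exprSr.
Qed.

Lemma prime_ideal_prod P (I : Type) (r : seq I) (F : I -> R) :
  is_prime_ideal P -> P (\prod_(i <- r) F i) -> exists i, P (F i).
Proof.
move=> [_ [P1 Pmul]]; elim: r => [|i r IHr]; first by rewrite big_nil.
by rewrite big_cons => /Pmul[Pi|/IHr//]; exists i.
Qed.

Lemma prime_ideal_exp P f k : is_prime_ideal P -> P (f ^+ k) -> (0 < k)%N /\ P f.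
Proof.
move=> [_ [P1 Pmul]]; elim: k => [|k IHk]; first by rewrite expr0.
by rewrite exprS => /Pmul[|/IHk[]].
Qed.

Lemma prime_ideal_cap P J1 J2 : is_prime_ideal P -> is_ideal J1 -> is_ideal J2 ->
  (forall f, P f <-> J1 f /\ J2 f) ->
  (forall f, P f <-> J1 f) \/ (forall f, P f <-> J2 f).
Proof.
move=> [_ [_ Pmul]] idJ1 idJ2 PJ.
case: (classic (forall f, J1 f -> P f)) => [sub1|/not_all_ex_not[g1 not_sub1]].
  by left=> f; split=> [/PJ[]|/sub1].
case: (classic (forall f, J2 f -> P f)) => [sub2|/not_all_ex_not[g2 not_sub2]].
  by right=> f; split=> [/PJ[]|/sub2].
have [[J1g1 Pg1] [J2g2 Pg2]] := (imply_to_and _ _ not_sub1, imply_to_and _ _ not_sub2).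
by have /Pmul[] // : P (g1 * g2) by apply/PJ; split; [apply: idealMr | apply: idealMl].
Qed.

Lemma mpolyX_neq0 m : 'X_[m] != 0 :> R.
Proof. by rewrite -msupp_eq0 msuppX. Qed.

Lemma mpolyX_inj : injective (fun m => 'X_[m] : R).
Proof. by move=> m1 m2 /(congr1 (@msupp n K)); rewrite !msuppX => -[]. Qed.

Lemma mcoeffXM d m (p : R) :
  ('X_[d] * p)@_m = if (d <= m)%MM then p@_(m - d) else 0.
Proof.
rewrite mulrC; case: ifP => [le_dm|le_dm].
  by rewrite -{1}(submK le_dm) addmC mcoeffMX.
apply/memN_msupp_eq0/negP; rewrite (perm_mem (msuppMX p d)) => /mapP[m' _ def_m].
by move: le_dm; rewrite def_m lem_addr.
Qed.

(** * Divisibility by monomials *)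

Definition Xdvd d F : Prop := exists q, F = 'X_[d] * q.

Lemma XdvdP d F : Xdvd d F <-> forall m, m \in msupp F -> (d <= m)%MM.
Proof.
split=> [[q ->] m|dF].
  by rewrite mcoeff_msupp mcoeffXM; case: ifP; rewrite ?eqxx.
exists (\sum_(m <- msupp F) F@_m *: 'X_[m - d]).
rewrite {1}(mpolyE F) mulr_sumr big_seq [RHS]big_seq; apply: eq_bigr => m Fm.
by rewrite -scalerAr -mpolyXD addmC submK ?dF.
Qed.

Lemma Xdvd_ideal d : is_ideal (Xdvd d).
Proof.
split; first by exists 0; rewrite mulr0.
split; first by move=> _ _ [q1 ->] [q2 ->]; exists (q1 + q2); rewrite mulrDr.
by move=> c _ [q ->]; exists (c * q); rewrite mulrCA.
Qed.

Lemma Xdvd_le d e F : (d <= e)%MM -> Xdvd e F -> Xdvd d F.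
Proof.
by move=> le_de [q ->]; exists ('X_[e - d] * q); rewrite mulrA -mpolyXD addmC submK.
Qed.

Lemma XdvdXM d e F : Xdvd (d + e) ('X_[d] * F) <-> Xdvd e F.
Proof.
split=> [[q]|[q ->]]; last by exists q; rewrite mpolyXD mulrA.
by rewrite mpolyXD -mulrA => /(mulfI (mpolyX_neq0 d)) ->; exists q.
Qed.

Lemma lem_U (j : 'I_n) m : (U_(j) <= m)%MM = (0 < m j)%N.
Proof.
apply/mnm_lepP/idP => [/(_ j)|m_j i]; first by rewrite mnm1E eqxx.
by rewrite mnm1E; case: eqP => [<-|].
Qed.

Definition subst0 (j : 'I_n) (F : R) : R :=
  F \mPo [tuple if i == j then 0 else 'X_i | i < n].

Lemma subst0X j m : subst0 j 'X_[m] = if m j == 0%N then 'X_[m] else 0.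
Proof.
rewrite /subst0 comp_mpolyX; case: eqP => [m_j|/eqP m_j].
  rewrite mpolyXE_id; apply: eq_bigr => i _; rewrite tnth_map tnth_ord_tuple.
  by case: eqP => [->|]; rewrite ?m_j ?expr0.
rewrite (bigD1 j) //= tnth_map tnth_ord_tuple eqxx expr0n (negbTE m_j).
by rewrite mul0r.
Qed.

Lemma Xdvd_U_subst0 j F : Xdvd U_(j) F <-> subst0 j F = 0.
Proof.
split=> [[q ->]|F0].
  by rewrite /subst0 rmorphM /= comp_mpolyXU -tnth_nth tnth_map tnth_ord_tuple eqxx mul0r.
have -> : F = \sum_(m <- msupp F) F@_m *: ('X_[m] - subst0 j 'X_[m]).
  rewrite (eq_bigr _ (fun m _ => scalerBr _ _ _)) sumrB -mpolyE.
  by rewrite -[X in _ - X]comp_mpolyEX -/(subst0 j F) F0 subr0.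
apply: ideal_sum (Xdvd_ideal _) _ => m _; apply: idealZ (Xdvd_ideal _) _.
rewrite subst0X; case: eqP => [_|/eqP m_j].
  by rewrite subrr; exact: ideal0 (Xdvd_ideal _).
by rewrite subr0; apply/XdvdP => _ /[!msuppX] /[!inE] /eqP->; rewrite lem_U lt0n.
Qed.

Lemma Xdvd_U_mul j f g : Xdvd U_(j) (f * g) -> Xdvd U_(j) f \/ Xdvd U_(j) g.
Proof.
rewrite !Xdvd_U_subst0 /subst0 rmorphM /= => /eqP; rewrite mulf_eq0.
by case/orP=> /eqP; [left|right].
Qed.

Lemma Xdvd_U_prime j : is_prime_ideal (Xdvd U_(j)).
Proof.
split; first exact: Xdvd_ideal.
split; last exact: Xdvd_U_mul.
by rewrite Xdvd_U_subst0 /subst0 rmorph1 => /eqP; rewrite oner_eq0.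
Qed.

Lemma exists_max_Xdvd f : f != 0 ->
  exists al, Xdvd al f /\ forall j : 'I_n, ~ Xdvd (U_(j) *+ (al j).+1) f.
Proof.
rewrite -msupp_eq0; case def_s: (msupp f) => [|m0 s] // _.
have ex_k (i : 'I_n) : exists k, has (fun m : 'X_{1..n} => m i == k) (msupp f).
  by exists (m0 i); apply/hasP; exists m0; rewrite ?def_s ?mem_head.
exists [multinom ex_minn (ex_k i) | i < n]; split.
  apply/XdvdP => m fm; apply/mnm_lepP => i; rewrite mnmE.
  by case: ex_minnP => k _; apply; apply/hasP; exists m.
move=> j /XdvdP; rewrite mnmE; case: ex_minnP => k /hasP[m fm /eqP m_j] _.
move=> /(_ m fm) /mnm_lepP /(_ j); rewrite mulmnE mnm1E eqxx m_j; lia.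
Qed.

(* Let x^al be the largest monomial dividing f.  Then x^(b - al) lies in P, hence
   so does some x_j with al_j < b_j; as x_j^(al_j + 1) does not divide f, every
   y with x^b | y f is divisible by x_j. *)
Lemma colon_Xdvd_prime b f P : is_prime_ideal P ->
  (forall y, P y <-> Xdvd b (y * f)) ->
  exists2 j : 'I_n, (0 < b j)%N & forall y, P y <-> Xdvd U_(j) y.
Proof.
move=> primeP Pf; have [Pideal [P1 _]] := primeP.
have f_neq0 : f != 0.
  by apply: contra_notN P1 => /eqP f0; apply/Pf; rewrite f0 mulr0; exists 0; rewrite mulr0.
have [al [al_f al_max]] := exists_max_Xdvd f_neq0.
have : P 'X_[b - al].
  apply/Pf; case: al_f => q ->; rewrite mulrA -mpolyXD.
  apply: Xdvd_le (ex_intro _ q erefl); apply/mnm_lepP => i; rewrite mnmDE mnmBE; lia.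
rewrite mpolyXE_id => /(prime_ideal_prod primeP)[j /(prime_ideal_exp primeP)[]].
rewrite mnmBE subn_gt0 => lt_al_b Pj; exists j; first exact: leq_ltn_trans lt_al_b.
move=> y; split=> [/Pf Py|[q ->]]; last exact: idealMr Pideal _.
have [g def_f] : Xdvd (U_(j) *+ al j) f.
  apply: Xdvd_le al_f; apply/mnm_lepP => i.
  by rewrite mulmnE mnm1E; case: eqP => [<-|]; lia.
have : Xdvd (U_(j) *+ al j + U_(j)) ('X_[U_(j) *+ al j] * (y * g)).
  rewrite -mulmSr mulrCA -def_f; apply: Xdvd_le Py; apply/mnm_lepP => i.
  by rewrite mulmnE mnm1E; case: eqP => [<-|]; lia.
move=> /XdvdXM /Xdvd_U_mul[//|g_j].
by case: (al_max j); rewrite def_f mulmSr; apply/XdvdXM.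
Qed.

Lemma ideal_preimM J c : is_ideal J -> is_ideal (fun q => J (q * c)).
Proof.
move=> idJ; split; first by rewrite mul0r; apply: ideal0.
split=> [f g Jf Jg|b f Jf]; first by rewrite mulrDl; apply: idealD.
by rewrite -mulrA; apply: idealMl.
Qed.

(** * Monomial ideals *)

Definition term_closed J := forall F m, J F -> J (F@_m *: 'X_[m]).

Lemma term_closed_monomial J F m : is_ideal J -> term_closed J -> J F ->
  m \in msupp F -> J 'X_[m].
Proof.
move=> idJ tJ JF; rewrite mcoeff_msupp => Fm.
by have := idealZ (F@_m)^-1 idJ (tJ F m JF); rewrite scalerA mulVf // scale1r.
Qed.

Lemma term_closedP J F : is_ideal J -> term_closed J ->
  J F <-> forall m, m \in msupp F -> J 'X_[m].
Proof.
move=> idJ tJ; split=> [JF m|JX]; first exact: term_closed_monomial.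
by rewrite (mpolyE F); apply: ideal_sum => // m /JX; apply: idealZ.
Qed.

Lemma ideal_gen_monomial_term_closed S : (forall f, S f -> is_monomial f) ->
  term_closed (ideal_gen S).
Proof.
move=> monS _ m [r [Sr ->]]; rewrite raddf_sum scaler_suml.
apply: ideal_sum (ideal_gen_ideal S) _ => x rx.
have [e def_x1] := monS _ (Sr x rx); rewrite /= def_x1 mulrC mcoeffXM.
case: ifP => [le_em|_]; last by rewrite scale0r; apply: ideal0 (ideal_gen_ideal S).
have -> : 'X_[m] = 'X_[m - e] * 'X_[e] :> R by rewrite -mpolyXD submK.
rewrite scalerAl -def_x1; apply: idealMl (ideal_gen_ideal S) _.
exact/ideal_gen_mem/Sr.
Qed.

Lemma ideal_gen_monomialP S p : (forall f, S f -> is_monomial f) ->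
  ideal_gen S 'X_[p] -> exists2 e, S 'X_[e] & (e <= p)%MM.
Proof.
move=> monS [r [Sr defX]]; apply: NNPP => no_div.
have : ('X_[p] : R)@_p != 0 by rewrite mcoeffX eqxx oner_eq0.
rewrite defX raddf_sum big1_seq ?eqxx // => x /andP[_ rx] /=.
have [e def_x1] := monS _ (Sr x rx); rewrite def_x1 mulrC mcoeffXM.
by case: ifP => // le_ep; case: no_div; exists e; rewrite // -def_x1; apply: Sr.
Qed.

Definition monomial_products J1 J2 : R -> Prop :=
  fun f => exists m1 m2, [/\ J1 'X_[m1], J2 'X_[m2] & f = 'X_[m1 + m2]].

Lemma ideal_mul_monomialE J1 J2 : is_ideal J1 -> is_ideal J2 ->
  term_closed J1 -> term_closed J2 ->
  ideal_mul J1 J2 = ideal_gen (monomial_products J1 J2).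
Proof.
move=> id1 id2 t1 t2; apply: pred_ext => f.
split; apply: ideal_gen_min; try exact: ideal_gen_ideal.
  move=> _ [g [h [J1g [J2h ->]]]].
  rewrite (mpolyE g) (mpolyE h) mulr_suml; apply: ideal_sum (ideal_gen_ideal _) _ => m1 gm1.
  rewrite mulr_sumr; apply: ideal_sum (ideal_gen_ideal _) _ => m2 hm2.
  rewrite -scalerAl -scalerAr scalerA -mpolyXD; apply: idealZ (ideal_gen_ideal _) _.
  apply: ideal_gen_mem; exists m1, m2; split=> //.
    exact: term_closed_monomial id1 t1 J1g gm1.
  exact: term_closed_monomial id2 t2 J2h hm2.
move=> _ [m1 [m2 [J1m1 J2m2 ->]]]; rewrite mpolyXD; apply: ideal_gen_mem.
by exists 'X_[m1], 'X_[m2].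
Qed.

Lemma monomial_products_monomial J1 J2 f : monomial_products J1 J2 f -> is_monomial f.
Proof. by move=> [m1 [m2 [_ _ ->]]]; exists (m1 + m2)%MM. Qed.

Lemma term_closed_mul J1 J2 : is_ideal J1 -> is_ideal J2 ->
  term_closed J1 -> term_closed J2 -> term_closed (ideal_mul J1 J2).
Proof.
move=> id1 id2 t1 t2; rewrite ideal_mul_monomialE //.
exact/ideal_gen_monomial_term_closed/monomial_products_monomial.
Qed.

Lemma term_closed_pow J k : is_ideal J -> term_closed J -> term_closed (ideal_pow J k).
Proof.
move=> idJ tJ; elim: k => [//|k IHk] /=.
exact: term_closed_mul (ideal_pow_ideal k idJ) idJ IHk tJ.
Qed.

Lemma min_mon_gen_le J m : J 'X_[m] -> exists2 u, min_mon_gen J u & (u <= m)%MM.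
Proof.
have [N] := ubnP (mdeg m); elim: N m => // N IHN m lt_mN Jm.
have [min_m|not_min] := classic (min_mon_gen J m); first by exists m; last exact: lepm_refl.
have [m' [Jm' le_m'm ne_m'm]] : exists m', [/\ J 'X_[m'], (m' <= m)%MM & m' <> m].
  apply: NNPP => none; apply: not_min; split=> // m' Jm' le_m'm.
  by apply: NNPP => ne; apply: none; exists m'.
have lt_deg : (mdeg m' < mdeg m)%N.
  have : (m - m')%MM != 0%MM.
    by apply: contra_notN ne_m'm => /eqP d0; rewrite -(submK le_m'm) d0 add0m.
  rewrite -mdeg_eq0 -{2}(submK le_m'm) mdegD; lia.
have [u min_u le_um'] := IHN m' (leq_trans lt_deg lt_mN) Jm'.
by exists u => //; apply: lepm_trans le_um' le_m'm.
Qed.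

(** * Associated primes of x^b J *)

Definition scaled (h : R) J : R -> Prop := fun f => exists2 q, J q & f = h * q.

Lemma scaled_ideal h J : is_ideal J -> is_ideal (scaled h J).
Proof.
move=> idJ; split; first by exists 0; rewrite ?mulr0 //; apply: ideal0.
split=> [_ _ [q1 Jq1 ->] [q2 Jq2 ->]|c _ [q Jq ->]].
  by exists (q1 + q2); [apply: idealD | rewrite mulrDr].
by exists (c * q); [apply: idealMl | rewrite mulrCA].
Qed.

Lemma ideal_scaleE h J : is_ideal J -> ideal_scale h J = scaled h J.
Proof.
move=> idJ; apply: pred_ext => f; split.
  by apply: ideal_gen_min (scaled_ideal h idJ) _ f => _ [q Jq ->]; exists q.
by move=> [q Jq ->]; apply: ideal_gen_mem; exists q.
Qed.

Lemma ideal_mul_scaled g h J1 J2 : is_ideal J1 -> is_ideal J2 ->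
  ideal_mul (scaled g J1) (scaled h J2) = scaled (g * h) (ideal_mul J1 J2).
Proof.
move=> id1 id2; apply: pred_ext => f; split.
  apply: ideal_gen_min; first exact/scaled_ideal/ideal_gen_ideal.
  move=> _ [_ [_ [[q1 J1q1 ->] [[q2 J2q2 ->] ->]]]].
  exists (q1 * q2); last by rewrite mulrACA.
  by apply: ideal_gen_mem; exists q1, q2.
move=> [q Jq ->]; rewrite mulrC; move: q Jq.
apply: ideal_gen_min (ideal_preimM _ (ideal_gen_ideal _)) _ => _ [q1 [q2 [J1q1 [J2q2 ->]]]].
rewrite mulrC mulrACA; apply: ideal_gen_mem; exists (g * q1), (h * q2).
by split; [exists q1 | split; [exists q2|]].
Qed.

Lemma ideal_pow_scaled h J k : is_ideal J ->
  ideal_pow (scaled h J) k = scaled (h ^+ k) (ideal_pow J k).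
Proof.
move=> idJ; elim: k => [|k IHk] /=.
  by apply: pred_ext => f; split=> // _; exists f; rewrite ?expr0 ?mul1r.
by rewrite IHk ideal_mul_scaled ?exprSr //; apply: ideal_pow_ideal.
Qed.

Lemma Ass_scaled h J P : h != 0 -> Ass J P -> Ass (scaled h J) P.
Proof.
move=> h_neq0 [primeP [f Pf]]; split=> //; exists (h * f) => y; rewrite Pf.
split=> [Jyf|[q Jq]]; first by exists (y * f); rewrite // mulrCA.
by rewrite mulrCA => /(mulfI h_neq0) ->.
Qed.

Lemma Ass_scaled_X b J P : is_ideal J -> (forall z, J ('X_[b] * z) -> J z) ->
  Ass (scaled 'X_[b] J) P ->
  Ass J P \/ exists2 j : 'I_n, (0 < b j)%N & forall y, P y <-> Xdvd U_(j) y.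
Proof.
move=> idJ cancelJ [primeP [f Pf]].
have PJ y : P y <-> Xdvd b (y * f) /\ J (y * f).
  rewrite Pf; split=> [[q Jq yf]|[[q yf] Jyf]].
    by split; [exists q | rewrite yf; apply: idealMl].
  by exists q => //; apply: cancelJ; rewrite -yf.
have := prime_ideal_cap primeP (ideal_preimM f (Xdvd_ideal b)) (ideal_preimM f idJ) PJ.
case=> [Pb|PJf].
  by right; apply: colon_Xdvd_prime Pb.
by left; split=> //; exists f.
Qed.

Lemma Ass_scaled_X_U b J (j : 'I_n) e : is_ideal J -> J 'X_[e] -> e j = 0%N ->
  (0 < b j)%N -> Ass (scaled 'X_[b] J) (Xdvd U_(j)).
Proof.
move=> idJ Je e_j b_j; split; first exact: Xdvd_U_prime.
have le_Ub : (U_(j) <= b)%MM by rewrite lem_U.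
exists 'X_[b - U_(j) + e] => y; split=> [[q ->]|[q Jq yX]].
  exists (q * 'X_[e]); first exact: idealMl.
  by rewrite -[in RHS](submK le_Ub) !mpolyXD; ring.
have : Xdvd (b - U_(j) + U_(j)) ('X_[b - U_(j)] * ('X_[e] * y)).
  by rewrite submK // mulrA -mpolyXD mulrC yX; exists q.
move=> /XdvdXM /Xdvd_U_mul[/XdvdP/(_ e)|//].
by rewrite msuppX mem_head lem_U e_j => /(_ isT).
Qed.

Lemma Ass_not_Xdvd_U J P (j : 'I_n) : (forall z, J ('X_j * z) -> J z) ->
  Ass J P -> ~ (forall y, P y <-> Xdvd U_(j) y).
Proof.
move=> cancelJ [[_ [P1 _]] [f Pf]] PU; apply/P1/Pf; rewrite mul1r.
by apply/cancelJ/Pf/PU; exists 1; rewrite mulr1.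
Qed.

Lemma Ass_scaled_nonzero h J P g : is_ideal J -> Ass (scaled h J) P ->
  P g -> g != 0 -> exists2 F, J F & F != 0.
Proof.
move=> idJ [[_ [P1 _]] [f Pf]] /Pf[q Jq gf] g_neq0; exists q => //.
apply: contra_notN P1 => /eqP q0; apply/Pf; exists 0; first exact: ideal0.
have /eqP : g * f = 0 by rewrite gf q0 mulr0.
by rewrite mulf_eq0 (negbTE g_neq0) /= => /eqP->; rewrite !mulr0.
Qed.

(** * Deleting the variables of x^a *)

Section OffSupport.
Variable a : 'X_{1..n}.

(* x^(mnm_off m) is the part of x^m coprime to x^a, so mnm_off c = 0 says that x^c
   only involves variables dividing x^a. *)
Definition mnm_off m : 'X_{1..n} :=
  [multinom if a i == 0%N then m i else 0%N | i < n].

Definition off_closed J := forall m, J 'X_[m] -> J 'X_[mnm_off m].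

Lemma mnm_off_le m : (mnm_off m <= m)%MM.
Proof. by apply/mnm_lepP => i; rewrite mnmE; case: ifP. Qed.

Lemma mnm_offD m1 m2 : mnm_off (m1 + m2) = (mnm_off m1 + mnm_off m2)%MM.
Proof. by apply/mnmP => i; rewrite !mnmE; case: ifP. Qed.

Lemma mnm_off_mono m1 m2 : (m1 <= m2)%MM -> (mnm_off m1 <= mnm_off m2)%MM.
Proof. by move/mnm_lepP => le_m12; apply/mnm_lepP => i; rewrite !mnmE; case: ifP. Qed.

Lemma mnm_off_eq0 (c : 'X_{1..n}) : (forall i, 0 < c i -> 0 < a i)%N -> mnm_off c = 0%MM.
Proof.
move=> supp_c; apply/mnmP => i; rewrite !mnmE; case: eqP => // a_i.
by apply/eqP; rewrite -leqn0 leqNgt; apply/negP => /supp_c; rewrite a_i.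
Qed.

Lemma mnm_off_coord m (j : 'I_n) : (0 < a j)%N -> mnm_off m j = 0%N.
Proof. by rewrite mnmE lt0n => /negbTE->. Qed.

Lemma off_closed_min_mon_gen J : is_ideal J ->
  (forall u, min_mon_gen J u -> mgcd a u = 0%MM) -> off_closed J.
Proof.
move=> idJ coprime m /min_mon_gen_le[u min_u le_um].
have le_u_off : (u <= mnm_off m)%MM.
  apply/mnm_lepP => i; have := congr1 (fun v : 'X_{1..n} => v i) (coprime u min_u).
  rewrite /mgcd !mnmE /=; have := mnm_lepP le_um i; case: eqP => a_i; lia.
by rewrite -(submK le_u_off) mpolyXD; apply: idealMl; case: min_u.
Qed.

Lemma off_closed_mul J1 J2 : is_ideal J1 -> is_ideal J2 ->
  term_closed J1 -> term_closed J2 -> off_closed J1 -> off_closed J2 ->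
  off_closed (ideal_mul J1 J2).
Proof.
move=> id1 id2 t1 t2 o1 o2; rewrite ideal_mul_monomialE // => p.
move=> /(ideal_gen_monomialP (@monomial_products_monomial _ _))[e].
move=> [m1 [m2 [J1m1 J2m2 /mpolyX_inj def_e]]] le_ep.
have /submK <- : (mnm_off m1 + mnm_off m2 <= mnm_off p)%MM.
  by rewrite -mnm_offD -def_e mnm_off_mono.
rewrite mpolyXD; apply: idealMl (ideal_gen_ideal _) _; apply: ideal_gen_mem.
by exists (mnm_off m1), (mnm_off m2); split; [apply: o1 | apply: o2 |].
Qed.

Lemma off_closed_pow J k : is_ideal J -> term_closed J -> off_closed J ->
  off_closed (ideal_pow J k).
Proof.
move=> idJ tJ oJ; elim: k => [//|k IHk] /=.
by apply: off_closed_mul => //; [apply: ideal_pow_ideal | apply: term_closed_pow].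
Qed.

Lemma off_closed_cancel J (c : 'X_{1..n}) z :
  is_ideal J -> term_closed J -> off_closed J -> mnm_off c = 0%MM -> J ('X_[c] * z) -> J z.
Proof.
move=> idJ tJ oJ c0 /(term_closedP _ idJ tJ) Jcz; apply/term_closedP => // m zm.
have /oJ : J 'X_[c + m] by apply: Jcz; rewrite mcoeff_msupp mulrC mcoeffMX -mcoeff_msupp.
rewrite mnm_offD c0 add0m => Joff.
by rewrite -(submK (mnm_off_le m)) mpolyXD; apply: idealMl.
Qed.

End OffSupport.

End Ideals.

Section ScaledPowers.
Variables (K : fieldType) (n : nat) (a : 'X_{1..n}) (I : {mpoly K[n]} -> Prop).
Hypotheses (idI : is_ideal I) (tI : term_closed I) (oI : off_closed a I).

Definition var_primes (P : {mpoly K[n]} -> Prop) : Prop :=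
  (exists e, I 'X_[e]) /\
  exists2 j : 'I_n, (0 < a j)%N & forall y, P y <-> Xdvd U_(j) y.

Lemma ideal_pow_cancel k (c : 'X_{1..n}) z : mnm_off a c = 0%MM ->
  ideal_pow I k ('X_[c] * z) -> ideal_pow I k z.
Proof.
apply: off_closed_cancel;
  [exact: ideal_pow_ideal | exact: term_closed_pow | exact: off_closed_pow].
Qed.

Lemma Ass_pow_not_var_primes k P : Ass (ideal_pow I k) P -> ~ var_primes P.
Proof.
move=> AssP [_ [j a_j Pj]]; apply: Ass_not_Xdvd_U _ AssP Pj => z.
by apply: ideal_pow_cancel; apply: mnm_off_eq0 => i; rewrite mnm1E; case: eqP => [<-|].
Qed.

Lemma Ass_scaled_pow k P : (0 < k)%N ->
  Ass (scaled 'X_[a *+ k] (ideal_pow I k)) P <-> Ass (ideal_pow I k) P \/ var_primes P.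
Proof.
move=> k_gt0; have idIk := ideal_pow_ideal k idI.
split=> [AssP|[|[[e Ie] [j a_j Pj]]]]; last 2 first.
- exact/Ass_scaled/mpolyX_neq0.
- rewrite (pred_ext Pj); apply: (Ass_scaled_X_U (e := mnm_off a e *+ k)) => //.
  + by rewrite -mpolyXn; apply/ideal_pow_exp/oI.
  + by rewrite mulmnE mnm_off_coord.
  + by rewrite mulmnE muln_gt0 a_j.
have cancel_ak z : ideal_pow I k ('X_[a *+ k] * z) -> ideal_pow I k z.
  by apply: ideal_pow_cancel; apply: mnm_off_eq0 => i; rewrite mulmnE muln_gt0 => /andP[].
have [|[j akj Pj]] := Ass_scaled_X idIk cancel_ak AssP; first by left.
right; split; last by exists j => //; move: akj; rewrite mulmnE muln_gt0 => /andP[].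
have /(Ass_scaled_nonzero idIk AssP)[|F /(ideal_pow_sub idI k_gt0) IF F_neq0] : P 'X_j.
- by apply/Pj; exists 1; rewrite mulr1.
- exact: mpolyX_neq0.
move: F_neq0; rewrite -msupp_eq0; case def_s: (msupp F) => [|m s] // _.
by exists m; apply: term_closed_monomial idI tI IF _; rewrite def_s mem_head.
Qed.

End ScaledPowers.

Theorem proposition4p10 (K : fieldType) (n : nat) (I : {mpoly K[n]} -> Prop)
    (a : 'X_{1..n}) :
  is_monomial_ideal I ->
  (forall u : 'X_{1..n}, min_mon_gen I u -> mgcd a u = 0%MM) ->
  (nearly_copersistent I <-> nearly_copersistent (ideal_scale 'X_[a] I)).
Proof.
move=> [S [monS defI]] min_coprime.
have idI : is_ideal I by rewrite (pred_ext defI); apply: ideal_gen_ideal.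
have tI : term_closed I by rewrite (pred_ext defI); apply: ideal_gen_monomial_term_closed.
have oI : off_closed a I := off_closed_min_mon_gen idI min_coprime.
rewrite ideal_scaleE //.
have := @nearly_copersistent_family_disjoint_union _
  (@is_monomial_prime K n) (@same_ideal K n)
  (fun m => Ass (ideal_pow I m)) (fun m => Ass (ideal_pow (scaled 'X_[a] I) m))
  (var_primes a I).
apply=> m P; last exact: Ass_pow_not_var_primes idI tI oI m P.
move=> m_gt0; rewrite ideal_pow_scaled // mpolyXn.
exact: Ass_scaled_pow idI tI oI m P m_gt0.
Qed.
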